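(* Let $X_1,\dots,X_n$ be i.i.d. real random variables whose common distribution is symmetric about an unknown $\mu\in\mathbb{R}$. Fix integers $k\le n$ and $1\le r\le m$, let $R(\theta)$ be the one-sided resampled median-of-means rank defined in the context (with the same random signs and permutation used for all $\theta$), and let $\Theta_n=\{\theta\in\mathbb{R}: R(\theta)\le m-r\}$. Then $$\mathbb{P}(\mu\in\Theta_n)=1-\frac{r}{m}.$$
   Context: Blocks: for $\ell=1,\dots,k$ let $B_\ell=\{i\in[n]: i\equiv \ell \pmod k\}$. Median: for reals $y_1,\dots,y_k$ with order statistics $y_{(1)}\le\dots\le y_{(k)}$, $\mathrm{med}(y_1,\dots,y_k)=y_{(k/2)}$ if $k$ is even and $y_{(\lfloor k/2\rfloor+1)}$ if $k$ is odd. Median-of-means: $\widehat\mu(x_1,\dots,x_n)=\mathrm{med}\big(\frac{1}{|B_1|}\sum_{i\in B_1}x_i,\dots,\frac{1}{|B_k|}\sum_{i\in B_k}x_i\big)$. Randomization: $\{\alpha_{i,j}\}_{i\in[n],j\in[m-1]}$ i.i.d. Rademacher signs independent of the data; $\pi$ a uniformly random permutation of $\{0,\dots,m-1\}$ independent of data and signs. For $\theta\in\mathbb{R}$: $\mathcal{D}_0(\theta)=(X_1,\dots,X_n)$, $\mathcal{D}_j(\theta)=(\alpha_{1,j}(X_1-\theta)+\theta,\dots,\alpha_{n,j}(X_n-\theta)+\theta)$ for $j\in[m-1]$; $S_j(\theta)=\widehat\mu(\mathcal{D}_j(\theta))-\theta$ for $j=0,\dots,m-1$. $S_j(\theta)\prec_\pi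 S_l(\theta)$ iff $S_j(\theta)<S_l(\theta)$, or $S_j(\theta)=S_l(\theta)$ and $\pi(j)<\pi(l)$. $R(\theta)=1+\sum_{j=1}^{m-1}\mathbb{I}\big(S_0(\theta)\prec_\pi S_j(\theta)\big)$. *)

From HB Require Import structures.
From mathcomp Require Import all_boot all_order all_algebra all_fingroup.
From mathcomp Require Import all_classical all_reals all_analysis.

Import Order.TTheory GRing.Theory Num.Theory.
Local Open Scope ring_scope.

(* Indices i in [n] are represented by i' : 'I_n with i = i'+1;
   blocks l in [k] by l' : 'I_k with l = l'+1. *)

(* median of a finite sequence of reals: y_(k/2) if k even,
   y_(floor(k/2)+1) if k odd (order statistics, 1-indexed). *)
Definition med {R : realType} (s : seq R) : R :=
  let k := size s in
  nth 0 (sort <=%R s) (if odd k then k./2 else (k./2).-1).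

Definition block {n k : nat} (l : 'I_k) : pred 'I_n :=
  fun i => (i.+1 %% k == l.+1 %% k)%N.

Definition block_mean {R : realType} {n k : nat} (x : 'I_n -> R) (l : 'I_k) : R :=
  (\sum_(i | block l i) x i) / (#|block (n:=n) l|)%:R.

Definition mom {R : realType} {n : nat} (k : nat) (x : 'I_n -> R) : R :=
  med [seq block_mean x l | l <- enum 'I_k].

Definition sgn {R : realType} (b : bool) : R := if b then 1 else -1.

(* alpha_{i,j} for j >= 1 (stored at index j-1); default irrelevant *)
Definition sign_at {n m : nat} (alpha : {ffun 'I_n * 'I_(m.-1) -> bool})
  (i : 'I_n) (j : nat) : bool :=
  match (insub j.-1 : option 'I_(m.-1)) with
  | Some j' => alpha (i, j')
  | None => true
  end.

Definition resample {R : realType} {n m : nat} (x : 'I_n -> R)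
  (alpha : {ffun 'I_n * 'I_(m.-1) -> bool}) (theta : R) (j : 'I_m) : 'I_n -> R :=
  fun i => if (j == 0 :> nat) then x i
           else sgn (sign_at alpha i j) * (x i - theta) + theta.

Definition Sstat {R : realType} {n : nat} (k : nat) {m : nat} (x : 'I_n -> R)
  (alpha : {ffun 'I_n * 'I_(m.-1) -> bool}) (theta : R) (j : 'I_m) : R :=
  mom k (resample x alpha theta j) - theta.

Definition prec_pi {R : realType} {m : nat} (pi : {perm 'I_m}) (S : 'I_m -> R)
  (j l : 'I_m) : bool :=
  (S j < S l) || ((S j == S l) && (pi j < pi l)%N).

Definition rankR {R : realType} {n : nat} (k : nat) {m : nat} (x : 'I_n -> R)
  (alpha : {ffun 'I_n * 'I_(m.-1) -> bool}) (pi : {perm 'I_m}) (theta : R) : nat :=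
  match m as m0 return ({ffun 'I_n * 'I_(m0.-1) -> bool} -> {perm 'I_m0} -> nat) with
  | 0 => fun _ _ => 1
  | m'.+1 => fun alpha pi =>
      (1 + #|[pred j : 'I_m'.+1 | (0 < j)%N &&
              prec_pi pi (Sstat k x alpha theta) ord0 j]|)%N
  end alpha pi.

From HB Require Import structures.
From mathcomp Require Import all_boot all_order all_algebra all_fingroup.
From mathcomp Require Import all_classical all_reals all_analysis.
From mathcomp Require Import measurable_realfun.
Import Order.TTheory GRing.Theory Num.Theory.
Local Open Scope classical_set_scope.
Local Open Scope ring_scope.

(* Fix theta = mu and let R_c be the rank of S_c among S_0, ..., S_(m-1) for the
   strict total order <_pi, so that R(mu) = R_0.  For c >= 1, replacing the data X
   by the resample D_c(mu), the signs alpha_(.,j) by alpha_(.,j) alpha_(.,c), and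
   pi by pi composed with the transposition (0 c) preserves the joint law of
   (X, alpha, pi): given the signs, D_c(mu) has the law of X because each X_i is
   symmetric about mu, and the new signs and permutation are again uniform and
   independent of the data.  This swap exchanges the roles of S_0 and S_c, so all
   events {R_c <= q} have the same probability p.  As the ranks R_0, ..., R_(m-1)
   are a permutation of 1, ..., m, exactly q of these events occur at every
   outcome, hence m p = q; with q = m - r this is the claim. *)

Section finite_events.
Context {d : measure_display} {T : measurableType d} {R : realType}.
Implicit Types mu : {measure set T -> \bar R}.

Lemma measurableT_preimage {d'} {U : measurableType d'} {f : T -> U} {Y : set U} :
  measurable_fun setT f -> measurable Y -> measurable (f @^-1` Y).
Proof. by move=> mf mY; rewrite -[X in measurable X]setTI; exact: mf. Qed.

Lemma measurable_ffun_pred {I : finType} (b : I -> T -> bool)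
    (F : pred {ffun I -> bool}) :
  (forall i, measurable [set t | b i t]) ->
  measurable [set t | F [ffun i => b i t]].
Proof.
move=> mb.
have -> : [set t | F [ffun i => b i t]] =
    \bigcup_(g in [set g | F g]) \bigcap_(i in [set: I]) [set t | b i t = g i].
  apply/seteqP; split => t /=.
    by move=> Ft; exists [ffun i => b i t] => // i _; rewrite ffunE.
  move=> [g Fg bg]; suff -> : [ffun i => b i t] = g by [].
  by apply/ffunP => i; rewrite ffunE bg.
apply: fin_bigcup_measurable => [|g _]; first exact: finite_finset.
apply: fin_bigcap_measurable => [|i _]; first exact: finite_finset.
case: (g i); first exact: mb.
have -> : [set t | b i t = false] = ~` [set t | b i t].
  by apply/seteqP; split => t /=; [move->|move/negP/negbTE].
exact: measurableC.
Qed.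

Lemma bigcup_fibers {K : finType} (f : T -> K) (E : set T) :
  E = \bigcup_(a in [set: K]) (E `&` f @^-1` [set a]).
Proof. by apply/seteqP; split => t /=; [exists (f t) | case=> a _ []]. Qed.

Lemma measurable_fibers {K : finType} (f : T -> K) (E : set T) :
  (forall a, measurable (E `&` f @^-1` [set a])) -> measurable E.
Proof.
move=> mEf; rewrite (bigcup_fibers f E).
by apply: fin_bigcup_measurable => [|a _]; [exact: finite_finset | exact: mEf].
Qed.

Lemma measure_sum_fibers mu {K : finType} {f : T -> K} {E : set T} :
  measurable E -> (forall a, measurable (f @^-1` [set a])) ->
  mu E = (\sum_(a : K) mu (E `&` f @^-1` [set a]))%E.
Proof.
move=> mE mf; rewrite {1}(bigcup_fibers f E) measure_fin_bigcup //; last first.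
- by move=> a _; apply: measurableI.
- apply/trivIsetP => a b _ _ ab; apply/seteqP; split => // t [[_ fa] [_ fb]].
  by move: ab; rewrite -fa -fb eqxx.
- exact: finite_finset.
have -> : [set: K] = [set` enum K].
  by apply/seteqP; split => a //= _; rewrite mem_enum.
by rewrite -fsbig_seq ?enum_uniq // big_enum.
Qed.

Lemma measure_preimage_uniform_inj mu {K : finType} (f : T -> K) (h : K -> K)
    (A : set K) :
  (forall A, measurable (f @^-1` A)) ->
  (forall a b, mu (f @^-1` [set a]) = mu (f @^-1` [set b])) ->
  injective h ->
  mu (f @^-1` (h @^-1` A)) = mu (f @^-1` A).
Proof.
move=> mf unif_f inj_h.
have fiberE (B : set K) a :
    f @^-1` B `&` f @^-1` [set a] = if `[< B a >] then f @^-1` [set a] else set0.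
  case: asboolP => Ba; apply/seteqP; split => t /=; first by case.
  - by move=> fa; rewrite fa.
  - by case=> Bt fa; apply: Ba; rewrite -fa.
  - by [].
rewrite !(measure_sum_fibers mu (mf _) (fun a : K => mf [set a])).
rewrite [RHS](reindex_inj inj_h); apply: eq_bigr => a _; rewrite !fiberE /=.
by case: asboolP.
Qed.

Lemma sum_measure_count mu {I : finType} (b : I -> T -> bool) (q : nat) :
  (forall i, measurable [set t | b i t]) ->
  (forall t, #|[pred i | b i t]| = q) ->
  \sum_(i : I) mu [set t | b i t] = mu setT *+ q.
Proof.
move=> mb card_b; pose rho t := [ffun i => b i t].
have mrho g : measurable (rho @^-1` [set g]).
  rewrite (_ : rho @^-1` _ = [set t | pred1 g [ffun i => b i t]]).
    exact: measurable_ffun_pred.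
  by apply/seteqP; split => t /= /eqP.
have fiber_sum i :
    mu [set t | b i t] = \sum_g mu (rho @^-1` [set g]) *+ g i.
  rewrite (measure_sum_fibers mu (mb i) mrho); apply: eq_bigr => g _.
  have -> : [set t | b i t] `&` rho @^-1` [set g] =
      if g i then rho @^-1` [set g] else set0.
    apply/seteqP; split => t /=; first by move=> [bit <-]; rewrite ffunE bit.
    by case: ifP => // gi rhog; split => //; rewrite -rhog ffunE in gi.
  by case: (g i); rewrite ?measure0.
under eq_bigr do rewrite fiber_sum.
rewrite exchange_big /=; under eq_bigr do rewrite sumrMnr.
transitivity (\sum_g mu (rho @^-1` [set g]) *+ q); last first.
  rewrite sumrMnl; congr (_ *+ _).
  rewrite [RHS](measure_sum_fibers mu measurableT mrho).
  by under [RHS]eq_bigr do rewrite setTI.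
apply: eq_bigr => g _.
have [[t rhot]|] := pselect (exists t, rho t = g); last first.
  move=> nofiber; rewrite (_ : rho @^-1` _ = set0) ?measure0 ?mul0rn //.
  by apply/seteqP; split => t //= rhot; apply: nofiber; exists t.
congr (_ *+ _); rewrite -(card_b t) -sum1_card [RHS]big_mkcond /= -rhot.
by apply: eq_bigr => i _; rewrite ffunE inE; case: (b i t).
Qed.

End finite_events.

Section order_statistics.
Variable R : realDomainType.

Lemma sorted_nth_lt (s : seq R) i (c : R) : sorted <=%R s -> (i < size s)%N ->
  (nth 0 s i < c) = (i < count (fun y => (y < c)%R) s)%N.
Proof.
elim: s i => [//|x s IHs] i /= sorted_xs i_lt.
have sorted_s := path_sorted sorted_xs.
have [xc|cx] := ltP x c; first by case: i i_lt => [|i] //= i_lt; rewrite IHs.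
have count0 : count (fun y => (y < c)%R) s = 0%N.
  have x_min : all (fun y => x <= y) s.
    by apply: order_path_min sorted_xs; exact: le_trans.
  apply/eqP; rewrite -leqn0 leqNgt -has_count; apply/hasP => -[y ys yc].
  by move/allP: x_min => /(_ y ys) xy; move: cx; rewrite leNgt (le_lt_trans xy yc).
by case: i i_lt => [|i] /= i_lt; rewrite ?IHs // count0 // ltNge cx.
Qed.

Lemma nth_sort_lt (s : seq R) i (c : R) : (i < size s)%N ->
  (nth 0 (sort <=%R s) i < c) = (i < count (fun y => (y < c)%R) s)%N.
Proof.
move=> i_lt; rewrite sorted_nth_lt ?size_sort ?sort_sorted //; last exact: le_total.
by rewrite (seq.permP (permEl (perm_sort _ _))).
Qed.

End order_statistics.

Section rank.
Variables (R : realType) (M : nat) (s : {perm 'I_M}) (S : 'I_M -> R).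
Local Notation prec := (prec_pi s S).

Definition rank_pi (c : 'I_M) : nat := #|[pred j | prec c j]|.+1.

Lemma prec_pi_irr c : prec c c = false.
Proof. by rewrite /prec_pi ltxx ltnn andbF. Qed.

Lemma prec_pi_trans a b c : prec a b -> prec b c -> prec a c.
Proof.
rewrite /prec_pi => /orP[ab|/andP[/eqP ab sab]] /orP[bc|/andP[/eqP bc sbc]].
- by rewrite (lt_trans ab bc).
- by rewrite -bc ab.
- by rewrite ab bc.
- by rewrite ab bc eqxx (ltn_trans sab sbc) orbT.
Qed.

Lemma prec_pi_total a b : a != b -> prec a b || prec b a.
Proof.
move=> ab; rewrite /prec_pi; case: ltgtP => //= _.
by rewrite -neq_ltn (inj_eq val_inj) (inj_eq perm_inj).
Qed.

Lemma rank_pi_le c : (rank_pi c <= M)%N.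
Proof.
rewrite -[M in (_ <= M)%N]card_ord; apply: proper_card; apply/properP; split.
  exact: subset_predT.
by exists c; rewrite ?inE ?prec_pi_irr.
Qed.

Lemma rank_pi_lt a b : prec a b -> (rank_pi b < rank_pi a)%N.
Proof.
move=> ab; rewrite ltnS; apply: proper_card; apply/properP; split.
  by apply/fintype.subsetP => j; rewrite !inE; exact: prec_pi_trans.
by exists b; rewrite !inE ?prec_pi_irr.
Qed.

Lemma rank_pi_inj : injective rank_pi.
Proof.
move=> a b rank_ab; apply/eqP; apply: contraT => /prec_pi_total.
by case/orP => /rank_pi_lt; rewrite rank_ab ltnn.
Qed.

Lemma card_rank_pi_le q : (q <= M)%N -> #|[pred c | (rank_pi c <= q)%N]| = q.
Proof.
move=> qM; pose f c : 'I_M := Ordinal (rank_pi_le c).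
have inj_f : injective f.
  by move=> a b /(congr1 val) /= ab; apply: rank_pi_inj; rewrite /rank_pi ab.
have card_lt : #|[set i : 'I_M | (i < q)%N]%SET| = q.
  rewrite -sum1_card (eq_bigl (fun i : 'I_M => (i < q)%N)) => [|i]; last by rewrite inE.
  by rewrite -(big_ord_widen _ (fun _ => 1%N) qM) sum1_card card_ord.
rewrite -[RHS]card_lt -(card_preimset _ inj_f).
by apply: eq_card => c; rewrite !inE.
Qed.

End rank.
Arguments rank_pi {R M} s S c.

Lemma rank_pi_comp (R : realType) (M : nat) (s g : {perm 'I_M}) (S : 'I_M -> R) c :
  rank_pi (g * s)%g (S \o g) c = rank_pi s S (g c).
Proof.
congr _.+1; rewrite -[RHS]cardsE -(card_preimset _ (@perm_inj _ g)).
by apply: eq_card => j; rewrite !inE /prec_pi /= !permM.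
Qed.

Lemma rankR_rank_pi {R : realType} {n m' : nat} (k : nat) (x : 'I_n -> R)
    (a : {ffun 'I_n * 'I_m' -> bool}) (s : {perm 'I_m'.+1}) (theta : R) :
  rankR (m := m'.+1) k x a s theta = rank_pi s (Sstat (m := m'.+1) k x a theta) ord0.
Proof.
rewrite /rankR /rank_pi add1n; congr _.+1; apply: eq_card => j; rewrite !inE.
by case: (unliftP ord0 j) => [j'|] ->; rewrite ?prec_pi_irr // lift0.
Qed.

Section measurable_statistics.
Context {d : measure_display} {T : measurableType d} {R : realType}.

Lemma measurable_fun_nth_sort (k : nat) (f : 'I_k -> T -> R) i :
  (forall l, measurable_fun setT (f l)) ->
  measurable_fun setT (fun t => nth 0 (sort <=%R [seq f l t | l <- enum 'I_k]) i).
Proof.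
move=> mf; have [ik|ki] := ltnP i k; last first.
  rewrite (_ : (fun t => _) = cst 0) //; apply/funext => t.
  by rewrite nth_default // size_sort size_map size_enum_ord.
apply: (measurability _ (RGenInftyO.measurableE R)) => //.
move=> _ [_ [x ->] <-]; rewrite setTI.
have ltE t : (nth 0 (sort <=%R [seq f l t | l <- enum 'I_k]) i < x) =
    (i < count [ffun l => (f l t < x)%R] (enum 'I_k))%N.
  rewrite nth_sort_lt ?size_map -?enumT ?size_enum_ord // count_map.
  by congr (_ < _)%N; apply: eq_count => l; rewrite /= ffunE.
rewrite (_ : _ @^-1` _ = [set t | (i < count [ffun l => (f l t < x)%R] (enum 'I_k))%N]).
  apply: (measurable_ffun_pred (fun l t => (f l t < x)%R)
    (fun g => i < count g (enum 'I_k))%N) => l.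
  by apply: measurableT_preimage => //; exact: measurable_fun_ltr.
by apply/seteqP; split => t; rewrite /= in_itv /= ltE.
Qed.

Lemma measurable_fun_mom {n : nat} (k : nat) (x : 'I_n -> T -> R) :
  (forall i, measurable_fun setT (x i)) ->
  measurable_fun setT (fun t => mom k (fun i => x i t)).
Proof.
move=> mx; under eq_fun do rewrite /mom /med size_map size_enum_ord.
apply: measurable_fun_nth_sort => l; apply: measurable_funM => //.
under eq_fun do rewrite big_mkcond /=.
by apply: measurable_sum => i; case: (block l i).
Qed.

Lemma measurable_fun_Sstat {n : nat} (k : nat) {m : nat} (x : 'I_n -> T -> R)
    (a : {ffun 'I_n * 'I_m.-1 -> bool}) (theta : R) (j : 'I_m) :
  (forall i, measurable_fun setT (x i)) ->
  measurable_fun setT (fun t => Sstat k (x^~ t) a theta j).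
Proof.
move=> mx; apply: measurable_funB => //.
apply: (measurable_fun_mom k (fun i t => resample (x^~ t) a theta j i)) => i.
rewrite /resample; case: (j == 0 :> nat) => //.
by apply: measurable_funD => //; apply: measurable_funM => //; apply: measurable_funB.
Qed.

Lemma measurable_rank_pi {M : nat} (s : {perm 'I_M}) (S : 'I_M -> T -> R) c
    (Q : pred nat) :
  (forall j, measurable_fun setT (S j)) ->
  measurable [set t | Q (rank_pi s (S^~ t) c)].
Proof.
move=> mS.
pose b (p : 'I_M * bool) t := if p.2 then S c t < S p.1 t else S c t == S p.1 t.
pose F (g : {ffun 'I_M * bool -> bool}) :=
  Q #|[pred j | g (j, true) || g (j, false) && (s c < s j)%N]|.+1.
have rankE t : F [ffun p => b p t] = Q (rank_pi s (S^~ t) c).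
  by rewrite /F /rank_pi; congr (Q _.+1); apply: eq_card => j; rewrite !inE !ffunE.
rewrite (_ : [set t | _] = [set t | F [ffun p => b p t]]); last first.
  by apply/seteqP; split => t /=; rewrite rankE.
apply: measurable_ffun_pred => -[j []]; apply: measurableT_preimage => //.
- exact: measurable_fun_ltr.
- exact: measurable_fun_eqr.
Qed.

End measurable_statistics.

Section sample_space.
Variables (R : realType) (n m' : nat).

Definition signs := {ffun 'I_n * 'I_m' -> bool}.
Definition sample := (('I_n -> R) * (signs * {perm 'I_m'.+1}))%type.
HB.instance Definition _ := gen_eqMixin sample.
HB.instance Definition _ := gen_choiceMixin sample.
HB.instance Definition _ := isPointed.Build sample (fun _ => 0, ([ffun => true], 1%g)).

Definition box (B : 'I_n -> set R) (A : set signs) (S : set {perm 'I_m'.+1}) :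
    set sample :=
  [set v | (forall i, B i (v.1 i)) /\ A v.2.1 /\ S v.2.2].

Definition boxes : set (set sample) :=
  [set E | exists B A S, (forall i, measurable (B i)) /\ E = box B A S].

Definition msample := g_sigma_algebraType boxes.

Lemma measurable_box B A S :
  (forall i, measurable (B i)) -> measurable (box B A S : set msample).
Proof. by move=> mB; apply: sub_sigma_algebra; exists B, A, S. Qed.

Lemma boxes_setI_closed : setI_closed boxes.
Proof.
move=> _ _ [B [A [S [mB ->]]]] [B' [A' [S' [mB' ->]]]].
exists (fun i => B i `&` B' i), (A `&` A'), (S `&` S'); split.
  by move=> i; apply: measurableI.
apply/seteqP; split => v /=.
  by move=> [[Bv [Av Sv]] [B'v [A'v S'v]]]; do !split => // i.
by move=> [BB'v [[Av A'v] [Sv S'v]]]; split; split => // i; case: (BB'v i).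
Qed.

Lemma boxesT : boxes setT.
Proof. by exists (fun=> setT), setT, setT; split => //; apply/seteqP. Qed.

Lemma measurable_fun_data i : measurable_fun setT (fun v : msample => v.1 i).
Proof.
move=> _ B mB; rewrite setTI.
have -> : (fun v : msample => v.1 i) @^-1` B =
    box (fun j => if j == i then B else setT) setT setT.
  apply/seteqP; split => v /=; last by move=> [/(_ i)]; rewrite eqxx.
  by move=> Bv; split => // j; case: eqP => [->|].
by apply: measurable_box => j; case: eqP.
Qed.

Lemma measurable_fun_to_sample d (T : measurableType d) (f : T -> msample) :
  (forall B A S, (forall i, measurable (B i)) -> measurable (f @^-1` box B A S)) ->
  measurable_fun setT f.
Proof.
move=> mf; apply: (@measurability _ _ T msample setT f boxes) => //.
by move=> _ [_ [B [A [S [mB ->]]]] <-]; rewrite setTI; exact: mf.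
Qed.

Variables (k : nat) (mu : R).

Definition sample_rank (c : 'I_m'.+1) (v : msample) : nat :=
  rank_pi v.2.2 (Sstat (m := m'.+1) k v.1 v.2.1 mu) c.

Lemma measurable_sample_rank c (Q : pred nat) :
  measurable [set v : msample | Q (sample_rank c v)].
Proof.
apply: (measurable_fibers (fun v : msample => v.2)) => -[a s].
rewrite (_ : _ `&` _ = [set v : msample |
    Q (rank_pi s (Sstat (m := m'.+1) k v.1 a mu) c)] `&` box (fun=> setT) [set a] [set s]).
  apply: measurableI; last exact: measurable_box.
  apply: (measurable_rank_pi s (fun j (v : msample) => Sstat (m := m'.+1) k v.1 a mu j)).
  by move=> j; apply: measurable_fun_Sstat => i; exact: measurable_fun_data.
apply/seteqP; split => -[x [a' s']]; rewrite /box /=.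
  by case=> Qv [] <- <-.
by case=> Qv [_ [-> ->]].
Qed.

End sample_space.
Arguments box {R n m'}.
Arguments sample_rank {R n m'}.
Arguments measurable_box {R n m' B A S}.
Arguments measurable_fun_to_sample {R n m' d T f}.
Arguments measurable_sample_rank {R n m'}.

Lemma sign_at_lift {n m' : nat} (a : {ffun 'I_n * 'I_m' -> bool}) i (c : 'I_m') :
  sign_at (m := m'.+1) a i (lift ord0 c) = a (i, c).
Proof. by rewrite /sign_at lift0 /= valK. Qed.

Section swap_invariance.
Context {d : measure_display} {T : measurableType d} {R : realType}.
Variables (P : probability T R) (n k m' : nat) (mu : R) (X : 'I_n -> T -> R)
  (alpha : T -> signs n m') (pi : T -> {perm 'I_m'.+1}).
Hypothesis mX : forall i, measurable_fun setT (X i).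
Hypothesis malpha : forall A, measurable (alpha @^-1` A).
Hypothesis mpi : forall S, measurable (pi @^-1` S).
Hypothesis indep : forall (B : 'I_n -> set R) (A : set (signs n m'))
    (S : set {perm 'I_m'.+1}),
  (forall i, measurable (B i)) ->
  P ((\bigcap_i (X i @^-1` B i)) `&` (alpha @^-1` A) `&` (pi @^-1` S)) =
  ((\prod_(i < n) P (X i @^-1` B i)) * P (alpha @^-1` A) * P (pi @^-1` S))%E.
Hypothesis X_sym : forall i (B : set R), measurable B ->
  P (X i @^-1` B) = P (X i @^-1` ((fun y => 2 * mu - y) @^-1` B)).
Hypothesis alpha_unif : forall a b, P (alpha @^-1` [set a]) = P (alpha @^-1` [set b]).
Hypothesis pi_unif : forall s s', P (pi @^-1` [set s]) = P (pi @^-1` [set s']).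

Definition flip (b : bool) (y : R) : R := sgn b * (y - mu) + mu.

Definition swap_signs (c : 'I_m') (a : signs n m') : signs n m' :=
  [ffun p => if p.2 == c then a p else a p == a (p.1, c)].

Definition swap0 (c : 'I_m') : {perm 'I_m'.+1} := tperm ord0 (lift ord0 c).

Definition obs (t : T) : msample R n m' := (X^~ t, (alpha t, pi t)).

(* The observation seen from the resample D_(c+1)(mu): its data are D_(c+1)(mu),
   and its signs are the products alpha_(i,j) alpha_(i,c+1) (booleans multiply
   by [==]) except at c, where alpha_(i,c+1) itself flips the data back to D_0. *)
Definition obs_swap (c : 'I_m') (t : T) : msample R n m' :=
  (fun i => flip (alpha t (i, c)) (X i t),
   (swap_signs c (alpha t), (swap0 c * pi t)%g)).

Lemma swap_signsK c : involutive (swap_signs c).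
Proof.
move=> a; apply/ffunP => p; rewrite !ffunE /=.
by case: eqP => // _; rewrite eqxx; case: (a p); case: (a (p.1, c)).
Qed.

Lemma flip_flip b1 b2 y : flip b1 (flip b2 y) = flip (b1 == b2) y.
Proof.
rewrite /flip addrK mulrA; congr (_ * _ + _).
by case: b1; case: b2; rewrite /sgn /= ?mul1r ?mulN1r ?opprK.
Qed.

Lemma flipT y : flip true y = y.
Proof. by rewrite /flip /sgn mul1r subrK. Qed.

Lemma measurable_fun_flip b : measurable_fun setT (flip b).
Proof.
by apply: measurable_funD => //; apply: measurable_funM => //; exact: measurable_funB.
Qed.

Lemma prob_flip i b (B : set R) : measurable B ->
  P (X i @^-1` (flip b @^-1` B)) = P (X i @^-1` B).
Proof.
move=> mB; case: b; first by rewrite (_ : flip true = id) //; apply/funext => y; rewrite flipT.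
rewrite [RHS]X_sym // (_ : flip false = fun y => 2 * mu - y) //; apply/funext => y.
by rewrite /flip /sgn /= mulN1r opprB addrAC mulr_natl mulr2n.
Qed.

Lemma preimage_obs_box B A S :
  obs @^-1` box B A S =
  (\bigcap_i (X i @^-1` B i)) `&` (alpha @^-1` A) `&` (pi @^-1` S).
Proof.
apply/seteqP; split => t /=.
  by move=> [XB [At St]]; split => //; split => // i _; exact: XB.
by move=> [[XB At] St]; split => // i; exact: XB.
Qed.

Definition flip_sets (c : 'I_m') (a : signs n m') (B : 'I_n -> set R) i :=
  flip (a (i, c)) @^-1` B i.

Lemma preimage_obs_swap_box c B A S a :
  obs_swap c @^-1` box B A S `&` alpha @^-1` [set a] =
  (\bigcap_i (X i @^-1` flip_sets c a B i)) `&`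
  (alpha @^-1` ([set a] `&` swap_signs c @^-1` A)) `&`
  (pi @^-1` ((fun s : {perm 'I_m'.+1} => swap0 c * s)%g @^-1` S)).
Proof.
apply/seteqP; split => t /=.
  by move=> [[XB [At St]] <-]; split => //; split => // i _; exact: XB.
by move=> [[XB [alpha_t At]] St]; subst a; split => //; split => // i; exact: XB.
Qed.

Lemma measurable_obs : measurable_fun setT obs.
Proof.
apply: measurable_fun_to_sample => B A S mB; rewrite preimage_obs_box.
apply: measurableI => //; apply: measurableI => //.
by apply: fin_bigcap_measurable => [|i _]; [exact: finite_finset | exact: measurableT_preimage].
Qed.

Lemma measurable_obs_swap c : measurable_fun setT (obs_swap c).
Proof.
apply: measurable_fun_to_sample => B A S mB.
apply: (measurable_fibers alpha) => a; rewrite preimage_obs_swap_box.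
apply: measurableI => //; apply: measurableI => //.
apply: fin_bigcap_measurable => [|i _]; first exact: finite_finset.
apply: measurableT_preimage => //.
exact: measurableT_preimage (measurable_fun_flip _) (mB i).
Qed.

Lemma prob_obs_swap_box c B A S : (forall i, measurable (B i)) ->
  P (obs_swap c @^-1` box B A S) = P (obs @^-1` box B A S).
Proof.
move=> mB; rewrite preimage_obs_box indep //.
have mflip a i : measurable (flip_sets c a B i).
  exact: measurableT_preimage (measurable_fun_flip _) (mB i).
have mswap : measurable (obs_swap c @^-1` box B A S).
  exact: measurableT_preimage (measurable_obs_swap c) (measurable_box mB).
rewrite (measure_sum_fibers P mswap (fun a => malpha [set a])).
transitivity (\sum_a ((\prod_(i < n) P (X i @^-1` B i)) *
    P (alpha @^-1` (swap_signs c @^-1` A) `&` alpha @^-1` [set a]) *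
    P (pi @^-1` ((fun s : {perm 'I_m'.+1} => swap0 c * s)%g @^-1` S))))%E.
  apply: eq_bigr => a _; rewrite preimage_obs_swap_box.
  apply: etrans (indep (flip_sets c a B) _ _ (mflip a)) _.
  rewrite preimage_setI setIC; congr (_ * _ * _)%E.
  by apply: eq_bigr => i _; exact: prob_flip.
rewrite -ge0_sume_distrl; last by move=> a _; apply: mule_ge0 => //; exact: prode_ge0.
rewrite -ge0_sume_distrr // -(measure_sum_fibers P (malpha _) (fun a => malpha [set a])).
rewrite measure_preimage_uniform_inj //; last exact: (can_inj (swap_signsK c)).
by rewrite measure_preimage_uniform_inj //; exact: mulgI.
Qed.

Lemma law_obs_swap c (E : set (msample R n m')) : measurable E ->
  P (obs_swap c @^-1` E) = P (obs @^-1` E).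
Proof.
move=> mE.
have := @measure_unique _ R (msample R n m') (boxes R n m') (fun=> setT) erefl
  (@boxes_setI_closed R n m')
  (fun=> boxesT R n m') _ (pushforward P (obs_swap c)) (pushforward P obs).
apply=> //.
- by apply/seteqP; split => // v _; exists 0%N.
- exact: measurable_obs_swap.
- exact: measurable_obs.
- by move=> ? ? _ [B [A [S [mB ->]]]]; exact: prob_obs_swap_box.
- move=> ? _; change (P (obs_swap c @^-1` setT) < +oo)%E.
  by rewrite preimage_setT probability_setT ltry.
Qed.

Lemma resample_obs_swap c t (j : 'I_m'.+1) :
  resample (m := m'.+1) (obs_swap c t).1 (obs_swap c t).2.1 mu j =
  resample (m := m'.+1) (X^~ t) (alpha t) mu (swap0 c j).
Proof.
apply/funext => i; rewrite /resample /=.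
case: (unliftP ord0 j) => [j'|] ->; last by rewrite /swap0 tpermL /= sign_at_lift.
rewrite lift0 /=; have [->|j'c] := eqVneq j' c.
  by rewrite /swap0 tpermR /= !sign_at_lift ffunE /= eqxx -/(flip _ _) flip_flip eqxx flipT.
rewrite /swap0 tpermD ?neq_lift 1?(inj_eq (@lift_inj _ ord0)) 1?eq_sym //.
rewrite lift0 /= !sign_at_lift ffunE /= (negbTE j'c) -/(flip _ _) flip_flip -/(flip _ _).
by congr flip; case: (alpha t (i, j')); case: (alpha t (i, c)).
Qed.

Lemma rank_obs_swap c t :
  sample_rank k mu ord0 (obs_swap c t) = sample_rank k mu (lift ord0 c) (obs t).
Proof.
rewrite /sample_rank -[lift ord0 c](tpermL ord0) -rank_pi_comp /=.
by congr rank_pi; apply/funext => j; rewrite /Sstat /= resample_obs_swap.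
Qed.

Lemma prob_rank_le_eq q c :
  P [set t | (sample_rank k mu c (obs t) <= q)%N] =
  P [set t | (sample_rank k mu ord0 (obs t) <= q)%N].
Proof.
case: (unliftP ord0 c) => [c'|] -> //.
transitivity (P (obs_swap c' @^-1` [set v | (sample_rank k mu ord0 v <= q)%N])).
  by congr (P _); apply/seteqP; split => t; rewrite /= rank_obs_swap.
exact: law_obs_swap (measurable_sample_rank k mu ord0 (fun r => r <= q)%N).
Qed.

Lemma measurable_rank_event c (Q : pred nat) :
  measurable [set t | Q (sample_rank k mu c (obs t))].
Proof. exact: measurableT_preimage measurable_obs (measurable_sample_rank k mu c Q). Qed.

Lemma prob_rank0_le_natmul q : (q <= m'.+1)%N ->
  P [set t | (sample_rank k mu ord0 (obs t) <= q)%N] *+ m'.+1 = 1%E *+ q.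
Proof.
move=> q_le; rewrite -[m'.+1 in LHS]card_ord -sumr_const.
rewrite -(eq_bigr _ (fun c _ => prob_rank_le_eq q c)).
rewrite (sum_measure_count P (fun c t => sample_rank k mu c (obs t) <= q)%N q).
- by congr (_ *+ _); exact: probability_setT.
- by move=> c; exact: (measurable_rank_event c (fun r => r <= q)%N).
- by move=> t; exact: card_rank_pi_le.
Qed.

Lemma prob_rank0_le r : (1 <= r <= m'.+1)%N ->
  P [set t | (sample_rank k mu ord0 (obs t) <= m'.+1 - r)%N] =
  (1 - r%:R / m'.+1%:R)%:E.
Proof.
move=> /andP[_ r_le]; have := prob_rank0_le_natmul _ (leq_subr r m'.+1).
set p := P _; have p_fin : p \is a fin_num.
  exact: fin_num_measure (measurable_rank_event ord0 (fun j => j <= m'.+1 - r)%N).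
rewrite -(fineK p_fin) => p_q; congr EFin.
have {p_q} fine_p : fine p *+ m'.+1 = (m'.+1 - r)%:R.
  by apply: EFin_inj; rewrite !EFin_natmul; exact: p_q.
apply: (mulIf (lt0r_neq0 (ltr0Sn _ m'))); rewrite mulr_natr fine_p mulrBl mul1r.
by rewrite divfK ?pnatr_eq0 // -natrB.
Qed.

End swap_invariance.
Arguments obs {d T R n m'} X alpha pi t.

Theorem corollary1 (R : realType) (d : measure_display) (T : measurableType d)
  (P : probability T R) (n k m r : nat)
  (X : 'I_n -> T -> R)
  (alpha : T -> {ffun 'I_n * 'I_(m.-1) -> bool})
  (pi : T -> {perm 'I_m}) (mu : R) :
  (1 <= k <= n)%N -> (1 <= r <= m)%N ->
  (* measurability of all random elements *)
  (forall i, measurable_fun setT (X i)) ->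
  (forall A, measurable (alpha @^-1` A)) ->
  (forall S, measurable (pi @^-1` S)) ->
  (* mutual independence of X_1, ..., X_n, the signs, and the permutation *)
  (forall (B : 'I_n -> set R) (A : set {ffun 'I_n * 'I_(m.-1) -> bool})
          (S : set {perm 'I_m}),
     (forall i, measurable (B i)) ->
     P ((\bigcap_i (X i @^-1` B i)) `&` (alpha @^-1` A) `&` (pi @^-1` S)) =
     ((\prod_(i < n) P (X i @^-1` B i)) * P (alpha @^-1` A) * P (pi @^-1` S))%E) ->
  (* identically distributed *)
  (forall i j (B : set R), measurable B ->
     P (X i @^-1` B) = P (X j @^-1` B)) ->
  (* common distribution symmetric about mu *)
  (forall i (B : set R), measurable B ->
     P (X i @^-1` B) = P (X i @^-1` ((fun y => 2 * mu - y) @^-1` B))) ->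
  (* the alpha_{i,j} are i.i.d. Rademacher: alpha is uniform on sign arrays *)
  (forall a, P (alpha @^-1` [set a]) = ((#|{ffun 'I_n * 'I_(m.-1) -> bool}|)%:R^-1)%:E) ->
  (* pi is a uniformly random permutation of {0, ..., m-1} *)
  (forall s, P (pi @^-1` [set s]) = ((m`!)%:R^-1)%:E) ->
  P [set t | (rankR k (fun i => X i t) (alpha t) (pi t) mu <= m - r)%N] =
    (1 - r%:R / m%:R)%:E.
Proof.
move=> _ r_bounds mX malpha mpi indep _ X_sym alpha_unif pi_unif.
case: m alpha pi r_bounds malpha mpi indep alpha_unif pi_unif => [|m'] alpha pi.
  by case/andP=> /leq_trans/[apply].
move=> r_bounds malpha mpi indep alpha_unif pi_unif.
transitivity (P [set t | (sample_rank k mu ord0 (obs X alpha pi t) <= m'.+1 - r)%N]).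
  by congr (P _); apply: eq_set => t; rewrite rankR_rank_pi.
apply: prob_rank0_le => //.
- by move=> a b; rewrite !alpha_unif.
- by move=> s s'; rewrite !pi_unif.
Qed.
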